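(* Let $n\ge2$ and let $e_1,\dots,e_n$ be the canonical basis of $\mathbb{R}^n$, $\Lambda=\mathbb{Z}^n$. For $1\le i\le n-1$ let $C_i=\mathrm{diag}(1,\dots,1,-1,1,\dots,1)$ be the diagonal matrix with $-1$ in position $i$ and $1$ elsewhere, and let $c_i=\tfrac12 e_{i+1}+\sum_{j=1}^{i-1}c_{ji}e_j$ with arbitrary choices $c_{ji}\in\{0,\tfrac12\}$. Then the subgroup $\Gamma$ of $I(\mathbb{R}^n)$ generated by $\{C_iL_{c_i}:1\le i\le n-1\}\cup\{L_{e_j}:1\le j\le n\}$ is a Bieberbach group (i.e. a discrete, cocompact, torsion-free subgroup of $I(\mathbb{R}^n)$).
   Context: $I(\mathbb{R}^n)\simeq\mathrm{O}(n)\ltimes\mathbb{R}^n$ is the isometry group of Euclidean space; for $B\in\mathrm{O}(n)$ and $b\in\mathbb{R}^n$, $BL_b$ denotes the isometry $x\mapsto B(x+b)$, and $L_b$ is translation by $b$. The set of groups obtained in this way (over all choices of the $c_{ji}$) is denoted $\mathcal{K}_n$. *)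

From HB Require Import structures.
From mathcomp Require Import all_boot all_order all_algebra.
From mathcomp Require Import all_classical all_reals all_analysis.
Set Implicit Arguments. Unset Strict Implicit. Unset Printing Implicit Defensive.
Import Order.TTheory GRing.Theory Num.Theory.
Import numFieldNormedType.Exports.
Local Open Scope ring_scope.
Local Open Scope classical_set_scope.

(* Affine maps of R^n (column vectors) in matrix form: (A, t) acts as x |-> A x + t.
   The paper's B L_b (x |-> B (x + b)) is the pair (B, B b). *)
Notation aff R n := ('M[R]_n * 'cV[R]_n)%type.

Definition act (R : realType) (n : nat) (g : aff R n) (x : 'cV[R]_n) : 'cV[R]_n :=
  g.1 *m x + g.2.

Definition is_isometry (R : realType) (n : nat) (g : aff R n) : Prop :=
  g.1^T *m g.1 = 1%:M.

Definition aff_id (R : realType) (n : nat) : aff R n := (1%:M, 0).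
Definition aff_comp (R : realType) (n : nat) (g h : aff R n) : aff R n :=
  (g.1 *m h.1, g.1 *m h.2 + g.2).
Definition aff_inv (R : realType) (n : nat) (g : aff R n) : aff R n :=
  (invmx g.1, - (invmx g.1 *m g.2)).

Definition BL (R : realType) (n : nat) (B : 'M[R]_n) (b : 'cV[R]_n) : aff R n :=
  (B, B *m b).
Definition L (R : realType) (n : nat) (b : 'cV[R]_n) : aff R n := (1%:M, b).

Inductive generated (R : realType) (n : nat) (S : set (aff R n)) : aff R n -> Prop :=
  | gen_base g : S g -> generated S g
  | gen_id : generated S (aff_id R n)
  | gen_comp g h : generated S g -> generated S h -> generated S (aff_comp g h)
  | gen_inv g : generated S g -> generated S (aff_inv g).

Fixpoint aff_pow (R : realType) (n : nat) (g : aff R n) (k : nat) : aff R n :=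
  match k with 0 => aff_id R n | k'.+1 => aff_comp g (aff_pow g k') end.

(* Discrete: every point of G is isolated in G, for the topology of
   I(R^n) = O(n) |x R^n (induced by the product topology on M_n(R) x R^n). *)
Definition discrete_subset (R : realType) (n : nat) (G : set (aff R n)) : Prop :=
  forall g, G g -> exists U : set (aff R n), nbhs g U /\ (forall h, G h -> U h -> h = g).

(* Cocompact: R^n / G is compact, i.e. some compact K has G-translates covering R^n *)
Definition cocompact (R : realType) (n : nat) (G : set (aff R n)) : Prop :=
  exists K : set 'cV[R]_n, compact K /\
    forall x : 'cV[R]_n, exists g, exists y, G g /\ K y /\ x = act g y.

Definition torsion_free (R : realType) (n : nat) (G : set (aff R n)) : Prop :=
  forall g k, G g -> (0 < k)%N -> aff_pow g k = aff_id R n -> g = aff_id R n.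

Definition bieberbach (R : realType) (n : nat) (G : set (aff R n)) : Prop :=
  (forall g, G g -> is_isometry g) /\
  discrete_subset G /\ cocompact G /\ torsion_free G.

(* canonical basis vector e_j (0-based index j) *)
Definition e (R : realType) (n : nat) (j : 'I_n) : 'cV[R]_n := delta_mx j 0.

Definition Cmat (R : realType) (n : nat) (i : 'I_n) : 'M[R]_n :=
  \matrix_(k, l) (if k == l then (if k == i then -1 else 1) else 0).

(* c_i = 1/2 e_{i+1} + sum_{j < i} c_{ji} e_j  (0-based; i+1 < n) *)
Definition cvec (R : realType) (n : nat) (c : 'I_n -> 'I_n -> R) (i : 'I_n)
  (ip : 'I_n) : 'cV[R]_n :=
  2^-1 *: e R ip + \sum_(j < n | (j < i)%N) c j i *: e R j.

Definition gens (R : realType) (n : nat) (c : 'I_n -> 'I_n -> R) : set (aff R n) :=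
  [set g : aff R n | (exists (i ip : 'I_n), val ip = (val i).+1 /\ g = BL (Cmat R i) (cvec c i ip))
        \/ (exists j : 'I_n, g = L (e R j))].

Definition Gamma (R : realType) (n : nat) (c : 'I_n -> 'I_n -> R) : set (aff R n) :=
  generated (gens c).

From mathcomp Require Import all_boot all_order all_algebra.
From mathcomp Require Import all_classical all_reals all_analysis.
From mathcomp Require Import ring lra.
Import Order.TTheory GRing.Theory Num.Theory.
Import numFieldNormedType.Exports.
Set Implicit Arguments. Unset Strict Implicit. Unset Printing Implicit Defensive.
Local Open Scope ring_scope.

(* Every element of Gamma has the form x |-> D_a x + t with D_a = diag((-1)^a_1, ..., (-1)^a_n),
   a_n = 0, and t in p(a)/2 + Z^n, where p is the F_2-linear map sending the i-th basis vector
   to twice c_i modulo 2.  This invariant is stable under products and inverses because signs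
   act trivially on (1/2)Z/Z.  It separates distinct elements of Gamma by distance 1, giving
   discreteness, and it excludes torsion: if a <> 0 and i is the largest index with a_i = 1,
   then the coordinate i+1 is not reflected, so g^k translates it by k t_(i+1), which is not 0
   since t_(i+1) lies in 1/2 + Z.  Cocompactness comes from the translations by Z^n. *)

Section SignMatrix.
Variables (R : pzRingType) (n : nat).

Definition sign_mx (a : 'I_n -> bool) : 'M[R]_n := diag_mx (\row_k (-1) ^+ a k).

Lemma mul_sign_mx p (a : 'I_n -> bool) (A : 'M[R]_(n, p)) i j :
  (sign_mx a *m A) i j = (-1) ^+ a i * A i j.
Proof. by rewrite mul_diag_mx !mxE. Qed.

Lemma sign_mxM a b : sign_mx a *m sign_mx b = sign_mx (fun k => a k (+) b k).
Proof. by rewrite mulmx_diag; congr diag_mx; apply/rowP => k; rewrite !mxE signr_addb. Qed.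

Lemma sign_mx0 : sign_mx (fun _ => false) = 1%:M.
Proof. by rewrite /sign_mx -diag_const_mx; congr diag_mx; apply/rowP => k; rewrite !mxE. Qed.

Lemma sign_mxK a : sign_mx a *m sign_mx a = 1%:M.
Proof. by rewrite sign_mxM -sign_mx0; congr sign_mx; apply: funext => k; rewrite addbb. Qed.

Lemma tr_sign_mx a : (sign_mx a)^T = sign_mx a.
Proof. exact: tr_diag_mx. Qed.

End SignMatrix.

Lemma invmx_sign_mx (R : comUnitRingType) n (a : 'I_n -> bool) :
  invmx (sign_mx R a) = sign_mx R a.
Proof.
have [a_unit _] := mulmx1_unit (sign_mxK R a).
by rewrite -[RHS]mul1mx -(mulVmx a_unit) -mulmxA sign_mxK mulmx1.
Qed.

Section HalfIntegers.
Variable R : archiNumFieldType.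

Definition half_coset (b : bool) (x : R) : bool := x - b%:R / 2 \is a Num.int.

Lemma half_coset_int x : half_coset false x = (x \is a Num.int).
Proof. by rewrite /half_coset mul0r subr0. Qed.

Lemma half_cosetD b b' x y :
  half_coset b x -> half_coset b' y -> half_coset (b (+) b') (x + y).
Proof.
rewrite /half_coset.
have -> : x + y - (b (+) b')%:R / 2 = (x - b%:R / 2) + (y - b'%:R / 2) + (b && b')%:R.
  by case: b; case: b' => /=; field.
by move=> hx hy; apply/rpredD/rpred_nat; apply: rpredD.
Qed.

Lemma half_cosetN b x : half_coset b x -> half_coset b (- x).
Proof.
rewrite /half_coset => hx.
have -> : - x - b%:R / 2 = - (x - b%:R / 2) - b%:R by field.
by rewrite rpredB ?rpredN ?rpred_nat.
Qed.

Lemma half_coset_signr (s : bool) b x : half_coset b x -> half_coset b ((-1) ^+ s * x).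
Proof. by case: s => hx /=; rewrite ?expr1 ?expr0 ?mulN1r ?mul1r // half_cosetN. Qed.

Lemma half_coset_uniq b b' x : half_coset b x -> half_coset b' x -> b = b'.
Proof.
have half_notint : (2^-1 : R) \isn't a Num.int.
  apply/negP => /norm_intr_ge1.
  by rewrite invr_eq0 pnatr_eq0 ger0_norm ?invr_ge0 // invf_ge1 // lern1 => /(_ isT).
rewrite /half_coset => hx hx'.
have : ((b%:R - b'%:R) / 2 : R) \is a Num.int.
  have -> : (b%:R - b'%:R) / 2 = (x - b'%:R / 2) - (x - b%:R / 2) :> R by field.
  exact: rpredB.
by case: b hx; case: b' hx' => //= _ _;
  rewrite ?subr0 ?sub0r ?mulNr ?mul1r ?rpredN (negbTE half_notint).
Qed.

Lemma half_coset_eq b x y :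
  half_coset b x -> half_coset b y -> `|x - y| < 1 -> x = y.
Proof.
move=> hx hy lt1; apply/eqP; rewrite -subr_eq0; apply/negPn/negP => nz.
suff : 1 <= `|x - y| by rewrite lt_geF.
apply: norm_intr_ge1 nz.
have -> : x - y = (x - b%:R / 2) - (y - b%:R / 2) by ring.
exact: rpredB.
Qed.

End HalfIntegers.

Lemma continuous_trmx (R : numFieldType) m n : continuous (@trmx R m n).
Proof.
move=> x A /nbhs_ballP [e e_gt0 xeA]; apply/nbhs_ballP; exists e => // y [_ xy].
by apply: xeA; split => // i j; rewrite !mxE; exact: xy.
Qed.

Section Gamma.
Variables (R : realType) (n : nat) (c : 'I_n -> 'I_n -> R).
Hypothesis c_half : forall j i : 'I_n, (j < i)%N -> c j i = 0 \/ c j i = 2^-1.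

Lemma e_coord (j m : 'I_n) (l : 'I_1) : e R j m l = (m == j)%:R.
Proof. by rewrite mxE ord1 andbT. Qed.

Lemma Cmat_sign_mx (i : 'I_n) : Cmat R i = sign_mx R (pred1 i).
Proof. by apply/matrixP => k l; rewrite !mxE /=; case: (k == l); case: (k == i). Qed.

Lemma cvec_coord (i ip m : 'I_n) :
  cvec c i ip m 0 = (m == ip)%:R / 2 + (if (m < i)%N then c m i else 0).
Proof.
rewrite !mxE summxE andbT mulrC; congr (_ + _).
rewrite big_mkcond (bigD1 m) //= big1 ?addr0 => [|k /negPf km].
  by case: ifP => // _; rewrite mxE e_coord eqxx mulr1.
by case: ifP => // _; rewrite mxE e_coord eq_sym km mulr0.
Qed.

(* Twice the [m]-th coordinate of [c_k], modulo 2 (by [c_half]). *)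
Definition gen_parity (k m : 'I_n) : bool :=
  (m == k.+1 :> nat) (+) ((m < k)%N && (c m k == 2^-1)).

Definition parity (a : 'I_n -> bool) (m : 'I_n) : bool :=
  \big[addb/false]_(k < n) (a k && gen_parity k m).

Lemma parity0 (m : 'I_n) : parity (fun _ => false) m = false.
Proof. by rewrite /parity big1. Qed.

Lemma parityD (a b : 'I_n -> bool) (m : 'I_n) :
  parity (fun k => a k (+) b k) m = parity a m (+) parity b m.
Proof. by rewrite /parity -big_split; apply: eq_bigr => k _; rewrite andb_addl. Qed.

Lemma parity1 (i m : 'I_n) : parity (pred1 i) m = gen_parity i m.
Proof. by rewrite /parity (bigD1 i) //= eqxx big1 ?addbF // => k /negPf ->. Qed.

Lemma half_coset_cvec (i ip m : 'I_n) :
  ip = i.+1 :> nat -> half_coset (gen_parity i m) (cvec c i ip m 0).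
Proof.
move=> ipE; rewrite cvec_coord /gen_parity -ipE; apply: half_cosetD.
  by rewrite /half_coset subrr rpred0.
case: ltnP => [lt_mi|_]; last by rewrite half_coset_int rpred0.
have [->|->] := c_half lt_mi; last by rewrite eqxx /half_coset mul1r subrr rpred0.
by rewrite eq_sym invr_eq0 pnatr_eq0 half_coset_int rpred0.
Qed.

Lemma exists_fixed_odd_coord (a : 'I_n -> bool) :
  (exists k, a k) -> (forall k, a k -> (k.+1 < n)%N) -> exists m, ~~ a m && parity a m.
Proof.
move=> [k0 ak0] a_top; have [i ai i_max] := arg_maxP (fun i : 'I_n => val i) ak0.
pose m := Ordinal (a_top i ai).
have am : ~~ a m by apply/negP => /i_max /=; rewrite leEnat ltnn.
exists m; rewrite am /parity (bigD1 i) //= ai big1 ?addbF.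
  by rewrite /gen_parity /= eqxx ltnNge leqnSn.
move=> j ji; case aj: (a j) => //=; move/i_max: aj => /=; rewrite leEnat => le_ji.
have lt_ji : (j < i)%N by rewrite ltn_neqAle le_ji andbT; exact: ji.
by rewrite /gen_parity /= eqSS gtn_eqF // ltnNge (leqW le_ji).
Qed.

Definition Gamma_invariant (g : aff R n) : Prop :=
  exists a : 'I_n -> bool, [/\ g.1 = sign_mx R a, forall k, a k -> (k.+1 < n)%N
    & forall m, half_coset (parity a m) (g.2 m 0)].

Lemma Gamma_invariant_L (t : 'cV[R]_n) :
  (forall m, t m 0 \is a Num.int) -> Gamma_invariant (L t).
Proof.
move=> t_int; exists (fun _ => false); split => // [|m]; first by rewrite sign_mx0.
by rewrite parity0 half_coset_int.
Qed.

Lemma Gamma_invariant_comp (g h : aff R n) :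
  Gamma_invariant g -> Gamma_invariant h -> Gamma_invariant (aff_comp g h).
Proof.
move=> [a [ga a_top ta]] [b [hb b_top tb]]; exists (fun k => a k (+) b k); split.
- by rewrite /= ga hb sign_mxM.
- by move=> k; case ak: (a k) => /= hk; [exact: a_top | exact: b_top].
- move=> m; rewrite /= mxE ga mul_sign_mx parityD addbC.
  by apply: half_cosetD; [apply: half_coset_signr |].
Qed.

Lemma Gamma_invariant_inv (g : aff R n) : Gamma_invariant g -> Gamma_invariant (aff_inv g).
Proof.
move=> [a [ga a_top ta]]; exists a; split => // [|m]; first by rewrite /= ga invmx_sign_mx.
by rewrite /= ga invmx_sign_mx mxE mul_sign_mx; apply/half_cosetN/half_coset_signr.
Qed.

Lemma Gamma_invariant_gen (i ip : 'I_n) :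
  ip = i.+1 :> nat -> Gamma_invariant (BL (Cmat R i) (cvec c i ip)).
Proof.
move=> ipE; exists (pred1 i); split.
- by rewrite Cmat_sign_mx.
- by move=> k /eqP ->; rewrite -ipE ltn_ord.
- move=> m; rewrite /= Cmat_sign_mx mul_sign_mx parity1.
  exact/half_coset_signr/half_coset_cvec.
Qed.

Lemma Gamma_invariantP (g : aff R n) : Gamma c g -> Gamma_invariant g.
Proof.
elim=> {g} [g [[i [ip [ipE ->]]] | [j ->]] | | g h _ ? _ ? | g _ ?].
- exact: Gamma_invariant_gen.
- by apply: Gamma_invariant_L => m; rewrite e_coord rpred_nat.
- by apply: Gamma_invariant_L => m; rewrite mxE rpred0.
- exact: Gamma_invariant_comp.
- exact: Gamma_invariant_inv.
Qed.

Lemma Gamma_isometry (g : aff R n) : Gamma c g -> is_isometry g.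
Proof. by case/Gamma_invariantP => a [ga _ _]; rewrite /is_isometry ga tr_sign_mx sign_mxK. Qed.

Lemma Gamma_invariant_ball (g h : aff R n) :
  Gamma_invariant g -> Gamma_invariant h -> ball g 1 h -> h = g.
Proof.
case: g h => [A t] [B u] [a [/= -> _ ta]] [b [/= -> _ ub]] [/= [_ AB] [_ tu]].
have ba : b = a.
  apply: funext => k; move: (AB k k); rewrite -ball_normE /= !mxE eqxx !mulr1n.
  by case: (a k); case: (b k); rewrite //= ?expr1 ?expr0 ltr_norml; lra.
subst b; congr pair; apply/matrixP => m l; rewrite ord1.
apply: half_coset_eq (ub m) (ta m) _.
by move: (tu m 0); rewrite -ball_normE /= distrC.
Qed.

Lemma Gamma_discrete : discrete_subset (Gamma c).
Proof.
move=> g Gg; exists (ball g 1); split; first exact: nbhsx_ballx.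
by move=> h Gh; apply: Gamma_invariant_ball; apply: Gamma_invariantP.
Qed.

Lemma aff_pow_coord (g : aff R n) a m k :
  g.1 = sign_mx R a -> a m = false -> (aff_pow g k).2 m 0 = k%:R * g.2 m 0.
Proof.
move=> ga am; elim: k => [|k IH] /=; first by rewrite mxE mul0r.
by rewrite mxE ga mul_sign_mx am IH -natr1; ring.
Qed.

Lemma Gamma_torsion_free : torsion_free (Gamma c).
Proof.
move=> g k /Gamma_invariantP [a [ga a_top ta]] k_gt0 gk1.
have t0 m : a m = false -> g.2 m 0 = 0.
  move=> am; have := aff_pow_coord k ga am; rewrite gk1 mxE => /esym/eqP.
  by rewrite mulf_eq0 pnatr_eq0 eqn0Ngt k_gt0 => /eqP.
have a0 : a = fun _ => false.
  apply: funext => j; apply/negbTE/negP => aj.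
  have [m /andP [/negbTE am pm]] := exists_fixed_odd_coord (ex_intro _ j aj) a_top.
  suff : half_coset false (g.2 m 0) by move/(half_coset_uniq (ta m)); rewrite pm.
  by rewrite t0 // half_coset_int rpred0.
case: g ga t0 {ta gk1} => A t /= -> t0; rewrite /aff_id a0 sign_mx0; congr pair.
by apply/matrixP => m l; rewrite ord1 mxE t0 ?a0.
Qed.

Lemma L_comp (u v : 'cV[R]_n) : aff_comp (L u) (L v) = L (v + u).
Proof. by rewrite /aff_comp /L /= !mul1mx. Qed.

Lemma Gamma_L_nat j (k : nat) : Gamma c (L (k%:R *: e R j)).
Proof.
elim: k => [|k IH]; first by rewrite scale0r; exact: gen_id.
rewrite -natr1 scalerDl scale1r -L_comp; apply: gen_comp => //.
by apply: gen_base; right; exists j.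
Qed.

Lemma Gamma_L (u : 'cV[R]_n) : (forall m, u m 0 \is a Num.int) -> Gamma c (L u).
Proof.
move=> u_int; rewrite [u]matrix_sum_delta.
apply: (big_ind (fun v => Gamma c (L v))) => [|v w Gv Gw|m _].
- exact: gen_id.
- by rewrite -L_comp; apply: gen_comp.
rewrite big_ord1; have /intrP [[k|k] ->] := u_int m; first exact: Gamma_L_nat.
rewrite NegzE intrN scaleNr (_ : L _ = aff_inv (L (k.+1%:R *: e R m))).
  exact/gen_inv/Gamma_L_nat.
by rewrite /aff_inv /L /= invmx1 mul1mx.
Qed.

Lemma Gamma_cocompact : cocompact (Gamma c).
Proof.
pose cube := [set v : 'rV[R]_n | forall i, `[0, 1]%classic (v ord0 i)]%classic.
exists [set v^T | v in cube]%classic; split.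
  apply: continuous_compact; first exact/continuous_subspaceT/continuous_trmx.
  by apply: (@rV_compact R n (fun=> `[0, 1]%classic)) => i; exact: segment_compact.
move=> x; pose u : 'cV[R]_n := \col_m (Num.floor (x m 0))%:~R.
exists (L u), (x - u); split; [|split].
- by apply: Gamma_L => m; rewrite mxE; apply/intrP; eexists.
- exists (x - u)^T; last by rewrite trmxK.
  move=> i; rewrite !mxE /= in_itv /= ord1.
  have /andP [x_ge x_lt] := floor_itv (x i 0); rewrite intrD rmorph1 in x_lt.
  by apply/andP; split; lra.
- by rewrite /act /L /= mul1mx subrK.
Qed.

End Gamma.

Theorem proposition4p1 (R : realType) (n : nat) (c : 'I_n -> 'I_n -> R) :
  (2 <= n)%N ->
  (forall j i : 'I_n, (j < i)%N -> c j i = 0 \/ c j i = 2^-1) ->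
  bieberbach (Gamma c).
Proof.
move=> _ c_half; split; first exact: Gamma_isometry c_half.
split; first exact: Gamma_discrete c_half.
split; first exact: Gamma_cocompact.
exact: Gamma_torsion_free c_half.
Qed.
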